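(* Assume the setting below and fix $m\in\mathbb{N}$. Let $r=r_m$ be such that the matrix $\mathbf{M}=(P^t(0,j))_{1\le t\le r,0\le j\le m}$ has rank $m+1$. Then for every $k\in\mathbb{N}$ there is a real matrix $A_k$ (with rows indexed by $\{0,\dots,m\}^k$ and columns by $\{1,\dots,r\}^k$), depending only on $q,m,k$, such that for every stochastic scenery $\eta$ with $\ell\le m$ and every bounded measurable $\phi$ with $\int_{\mathbb{R}}\phi\,d\alpha=0$, $$\mathbf{Q}^k(\phi)=A_k\,\mathbf{p}^k(\phi).$$ (One may take $A_k$ to be a left inverse of the $k$-fold tensor power $\mathbf{M}^{\otimes k}$.)
   Context: Setting: $q$ is a probability mass function on $\mathbb{Z}$ with $\sum_z zq(z)=0$, $\sum_z z^2q(z)<\infty$, $q(z)=q(-z)$ for all $z$, $\gcd\{n\ge1:q^{*n}(0)>0\}=1$, and support generating $\mathbb{Z}$; $S$ is the random walk with increment law $q$, $P^t(z,w)=P[S_t=w\mid S_0=z]$. $\alpha\in\mathcal{P}(\mathbb{R})$ is a reference measure, and a stochastic scenery $\eta:\mathbb{Z}\to\mathcal{P}(\mathbb{R})$ with $\eta(z)\neq\alpha$ for at least one and at most finitely many $z$; the observations $(X_n)$ are, conditionally on $S$, independent with law $\eta(S_n)$. Let $a=\min\{j:\eta(j)\neq\alpha\}$, $b=\max\{j:\eta(j)\neq\alpha\}$, $\ell=b-a$. For bounded measurable $\phi$, $\langle\phi\rangle_z=\int_{\mathbb{R}}\phi\,d\eta(z)$. For $\mathbf{t}=(t_1,\dots,t_k)\in\mathbb{N}^k$,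 $p_{\mathbf{t}}(\phi)=\sum_{z\in\mathbb{Z}}E[\phi(X_0)\phi(X_{t_1})\cdots\phi(X_{t_1+\cdots+t_k})\mid S_0=z]$, and $\mathbf{p}^k(\phi)$ is the vector $(p_{\mathbf{t}}(\phi))_{\mathbf{t}\in\{1,\dots,r\}^k}$. For $\mathbf{d}=(d_1,\dots,d_k)\in\{0,1,\dots,m\}^k$, $$Q^k_{\mathbf{d}}(\phi)=\sum_{\substack{(z_1,\dots,z_{k+1})\in\mathbb{Z}^{k+1}\\ |z_{j+1}-z_j|=d_j,\ j=1,\dots,k}}\langle\phi\rangle_{z_1}\langle\phi\rangle_{z_2}\cdots\langle\phi\rangle_{z_{k+1}},$$ and $\mathbf{Q}^k(\phi)=(Q^k_{\mathbf{d}}(\phi))_{\mathbf{d}\in\{0,\dots,m\}^k}$. *)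

From HB Require Import structures.
From mathcomp Require Import all_boot all_order all_algebra.
From mathcomp Require Import all_classical all_reals all_analysis.
Set Implicit Arguments. Unset Strict Implicit. Unset Printing Implicit Defensive.
Import Order.TTheory GRing.Theory Num.Theory.
Import numFieldNormedType.Exports.
Local Open Scope classical_set_scope.
Local Open Scope ring_scope.

Section Defs.
Variable R : realType.

Definition zpartial (f : int -> R) (N : nat) : R :=
  \sum_(0 <= i < (N.*2).+1) f (i%:Z - N%:Z).

Definition zsum (f : int -> R) : R := limn (zpartial f).

Definition zsummable (f : int -> R) : Prop := cvgn (zpartial f).

Fixpoint qconv (q : int -> R) (n : nat) (z : int) : R :=
  match n with
  | 0 => (z == 0)%:R
  | n'.+1 => zsum (fun y => qconv q n' y * q (z - y))
  end.

(* transition probability P^t(z,w) = P[S_t = w | S_0 = z] of the walk *)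
Definition Ptrans (q : int -> R) (t : nat) (z w : int) : R := qconv q t (w - z).

Definition walk_law (q : int -> R) : Prop :=
  [/\ (forall z, 0 <= q z) /\ zsum q = 1,
      zsummable (fun z => (z ^+ 2)%:~R * q z) ,
      zsum (fun z => z%:~R * q z) = 0,
      (forall z, q z = q (- z)) &
      [/\ (* gcd {n >= 1 : q^{*n}(0) > 0} = 1 *)
          (forall d : nat, (forall n : nat, (0 < n)%N -> 0 < qconv q n 0 -> (d %| n)%N) -> d = 1%N) &
          (* the support of q generates Z as an additive group *)
          (forall G : int -> Prop, G 0 -> (forall x y, G x -> G y -> G (x - y)) ->
             (forall z, 0 < q z -> G z) -> forall z, G z)]].

(* the matrix M = (P^t(0,j))_{1<=t<=r, 0<=j<=m}; row i stands for t = i+1 *)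
Definition Mmat (q : int -> R) (m r : nat) : 'M[R]_(r, m.+1) :=
  \matrix_(i < r, j < m.+1) Ptrans q i.+1 0 j%:Z.

Definition bracket (eta : int -> probability R R) (phi : R -> R) (z : int) : R :=
  Rintegral (eta z) setT phi.

Definition scenery_width_le (alpha : probability R R)
    (eta : int -> probability R R) (m : nat) : Prop :=
  exists a b : int,
    [/\ (eta a : set R -> \bar R) <> alpha,
        (eta b : set R -> \bar R) <> alpha,
        (forall j, (eta j : set R -> \bar R) <> alpha -> a <= j <= b) &
        b - a <= m%:Z].

(* E[ phi(X_0) phi(X_{t_1}) ... phi(X_{t_1+...+t_k}) | S_0 = z ]:
   by the Markov property of S and conditional independence of the X_n
   given S, this is
   sum_{w_1,...,w_k} prod P^{t_i}(w_{i-1},w_i) prod_{i=0}^k <phi>_{w_i},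
   with w_0 = z. *)
Fixpoint cond_moment (q : int -> R) (eta : int -> probability R R)
    (phi : R -> R) (ts : seq nat) (z : int) : R :=
  bracket eta phi z *
  match ts with
  | [::] => 1
  | t :: ts' => zsum (fun w => Ptrans q t z w * cond_moment q eta phi ts' w)
  end.

(* p_t(phi) for t = (t_1,...,t_k) in {1,...,r}^k (ordinal i stands for i+1) *)
Definition pk (q : int -> R) (eta : int -> probability R R) (phi : R -> R)
    (k r : nat) (t : {ffun 'I_k -> 'I_r}) : R :=
  zsum (cond_moment q eta phi [seq (t i).+1 | i <- enum 'I_k]).

Fixpoint Qsum (eta : int -> probability R R) (phi : R -> R)
    (ds : seq nat) (z : int) : R :=
  bracket eta phi z *
  match ds with
  | [::] => 1
  | d :: ds' => zsum (fun w => if `|w - z|%N == d then Qsum eta phi ds' w else 0)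
  end.

Definition Qk (eta : int -> probability R R) (phi : R -> R)
    (k m : nat) (d : {ffun 'I_k -> 'I_m.+1}) : R :=
  zsum (Qsum eta phi [seq (d i : nat) | i <- enum 'I_k]).

End Defs.

From HB Require Import structures.
From mathcomp Require Import all_boot all_order all_algebra.
From mathcomp Require Import all_classical all_reals all_analysis.
From mathcomp Require Import zify.
Import Order.TTheory GRing.Theory Num.Theory.
Import numFieldNormedType.Exports.
Local Open Scope classical_set_scope.
Local Open Scope ring_scope.

(* Since int phi d alpha = 0, the weights <phi>_z vanish outside the window
   [a, b] where eta differs from alpha, so p_t(phi) and Q^k_d(phi) are finite
   sums: each is the total weight of a product of kernel matrices on the
   window, with kernels P^(t_i)(z, w) for p_t and 1{|w - z| = d_i} for Q_d.
   On a window of width at most m the symmetry of the walk gives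
   P^t(z, w) = sum_j M_(t,j) 1{|w - z| = j}, so applying a left inverse L of M
   in every factor and expanding the product multilinearly yields
   Q^k = L^(tensor k) p^k. *)

Section ZSum.
Variable R : realType.
Implicit Types f : int -> R.

Lemma zpartialS f n :
  zpartial f n.+1 = f (- (n.+1)%:Z) + zpartial f n + f (n.+1)%:Z.
Proof.
rewrite /zpartial doubleS big_nat_recl // big_nat_recr //= addrA.
congr (_ + _ + _); [by congr f; lia | | by congr f; lia].
by apply: eq_bigr => i _; congr f; lia.
Qed.

Lemma zsum_opp f : zsum (fun x => f (- x)) = zsum f.
Proof.
rewrite /zsum (_ : zpartial _ = zpartial f) //; apply: funext => n.
rewrite /zpartial big_nat_rev.
by apply: eq_big_nat => i /andP[_ ilt]; congr f; lia.
Qed.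

Lemma zsum_finite f (B : nat) :
  (forall x, f x != 0 -> - B%:Z <= x <= B%:Z) ->
  zsum f = \sum_(i < (B.*2).+1) f (i%:Z - B%:Z).
Proof.
move=> f_supp.
have f0 x : (x < - B%:Z) || (B%:Z < x) -> f x = 0.
  move=> x_out; apply/eqP; apply: contraTT x_out => /f_supp.
  by rewrite negb_or -!leNgt => /andP[-> ->].
have zpartial_stable n : zpartial f (B + n) = zpartial f B.
  elim: n => [|n IHn]; first by rewrite addn0.
  rewrite addnS zpartialS IHn !f0 ?addr0 ?add0r //; apply/orP; [right|left]; lia.
rewrite /zsum -(big_mkord xpredT (fun i => f (i%:Z - B%:Z))) -/(zpartial f B).
apply: cvg_lim => //; apply: cvg_near_cst; exists B => // n /= Bn.
by rewrite -(subnKC Bn) zpartial_stable.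
Qed.

End ZSum.

Section SymmetricWalk.
Context {R : realType} {q : int -> R}.
Hypothesis q_sym : forall z, q z = q (- z).

Lemma qconv_opp n z : qconv q n (- z) = qconv q n z.
Proof.
elim: n z => [|n IHn] z /=; first by rewrite oppr_eq0.
rewrite -[RHS]zsum_opp; congr zsum; apply: funext => y.
by rewrite IHn q_sym; congr (_ * q _); lia.
Qed.

Lemma Ptrans_absz t z w : Ptrans q t z w = Ptrans q t 0 `|w - z|%N.
Proof.
rewrite /Ptrans subr0; case: (w - z) => n //=.
by rewrite NegzE qconv_opp.
Qed.

End SymmetricWalk.

Lemma left_inverse_combination {R : pzRingType} {V : lmodType R} {m r : nat}
    {L : 'M[R]_(m, r)} {M : 'M[R]_(r, m)} :
  L *m M = 1%:M -> forall (X : 'I_r -> V) (Y : 'I_m -> V),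
  (forall s, X s = \sum_j M s j *: Y j) -> forall e, \sum_s L e s *: X s = Y e.
Proof.
move=> LM1 X Y XE e; under eq_bigr do rewrite XE scaler_sumr.
rewrite exchange_big /=; transitivity (\sum_j (L *m M) e j *: Y j).
  apply: eq_bigr => j _; rewrite mxE scaler_suml.
  by apply: eq_bigr => s _; rewrite scalerA.
rewrite LM1 (bigD1 e) //= big1 ?addr0 => [|j je]; first by rewrite mxE eqxx scale1r.
by rewrite mxE eq_sym (negbTE je) scale0r.
Qed.

Lemma prod_sum_scale_ffun {R : comPzRingType} {A : algType R} {k r : nat}
    (a : 'I_k -> 'I_r -> R) (X : 'I_r -> A) :
  \prod_(i < k) \sum_(s < r) a i s *: X s =
  \sum_(t : {ffun 'I_k -> 'I_r}) (\prod_(i < k) a i (t i)) *: \prod_(i < k) X (t i).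
Proof.
rewrite bigA_distr_bigA; apply: eq_bigr => t _; exact: scaler_prod.
Qed.

Definition dist_kernel {R : pzSemiRingType} (j : nat) (z w : int) : R :=
  (`|w - z|%N == j)%:R.

Section Window.
Context {R : realType} (a b : int) (c : int -> R).
Hypothesis c_supp : forall x, c x != 0 -> a <= x <= b.

Let B := (`|a| + `|b|)%N.
Local Notation N := (B.*2).+1.

Definition window (i : 'I_N) : int := i%:Z - B%:Z.

(* The indicator on the column index does not change [_ *m weight_col], but it
   confines [F] to pairs of sites in the support of [c] (see kernel_mx_distance). *)
Definition kernel_mx (F : int -> int -> R) : 'M[R]_N :=
  \matrix_(u, v) (c (window u) * F (window u) (window v) * (c (window v) != 0)%:R).

Definition weight_col : 'cV[R]_N := \col_u c (window u).

Definition total (X : 'M[R]_N) : R := \sum_i (X *m weight_col) i 0.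

Let c_supp_window x : c x != 0 -> - B%:Z <= x <= B%:Z.
Proof. by move=> /c_supp; rewrite /B; lia. Qed.

Lemma total_sum_scale (I : finType) (f : I -> R) (X : I -> 'M[R]_N) :
  \sum_i f i * total (X i) = total (\sum_i f i *: X i).
Proof.
rewrite /total mulmx_suml; under [RHS]eq_bigr do rewrite summxE.
rewrite exchange_big; apply: eq_bigr => t _.
by rewrite mulr_sumr; apply: eq_bigr => i _; rewrite -scalemxAl [RHS]mxE.
Qed.

Section Chain.
Context {T : Type} (K : T -> int -> int -> R) (G : seq T -> int -> R).
Hypothesis G_nil : forall z, G [::] z = c z.
Hypothesis G_cons :
  forall x s z, G (x :: s) z = c z * zsum (fun w => K x z w * G s w).

Lemma chain_supp s z : G s z != 0 -> c z != 0.
Proof.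
case: s => [|x s]; rewrite ?G_nil ?G_cons //.
by apply: contraNN => /eqP ->; rewrite mul0r.
Qed.

Lemma chain_mxE s i :
  G s (window i) = ((\prod_(x <- s) kernel_mx (K x)) *m weight_col) i 0.
Proof.
elim: s i => [|x s IHs] i; first by rewrite big_nil mul1mx mxE G_nil.
rewrite big_cons -mulmxE -mulmxA mxE G_cons (@zsum_finite _ _ B); last first.
  move=> w; rewrite mulf_eq0 negb_or => /andP[_ /chain_supp]; exact: c_supp_window.
rewrite big_distrr /=; apply: eq_bigr => j _; rewrite -/(window j) -IHs mxE.
have [cj0|cj] := eqVneq (c (window j)) 0.
  have [->|/chain_supp] := eqVneq (G s (window j)) 0; first by rewrite !mulr0.
  by rewrite cj0 eqxx.
by rewrite mulr1 mulrA.
Qed.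

Lemma zsum_chain s : zsum (G s) = total (\prod_(x <- s) kernel_mx (K x)).
Proof.
rewrite (@zsum_finite _ _ B) => [|z /chain_supp]; last exact: c_supp_window.
by apply: eq_bigr => i _; rewrite -chain_mxE.
Qed.

End Chain.

Lemma kernel_mx_distance (m : nat) (F : int -> int -> R) (f : int -> R) :
  b - a <= m%:Z -> (forall z w, F z w = f `|w - z|%N) ->
  kernel_mx F = \sum_(j < m.+1) f j *: kernel_mx (dist_kernel j).
Proof.
move=> width FE; apply/matrixP => u v; rewrite summxE !mxE.
under eq_bigr do rewrite !mxE /dist_kernel.
have [cv0|cv] := eqVneq (c (window v)) 0.
  by rewrite !mulr0 big1 // => j _; rewrite !mulr0.
have [cu0|cu] := eqVneq (c (window u)) 0.
  by rewrite cu0 !mul0r big1 // => j _; rewrite !mul0r mulr0.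
have uv_lt : (`|window v - window u| < m.+1)%N.
  by move: (c_supp _ cu) (c_supp _ cv) width; rewrite /window; lia.
rewrite (bigD1 (Ordinal uv_lt)) //= eqxx big1 ?addr0 => [|j j_uv]; last first.
  rewrite (_ : (_ == _) = false) ?(mulr0, mul0r) //.
  by move: j_uv; apply: contraNF => /eqP uvj; apply/eqP/val_inj; rewrite /= -uvj.
by rewrite FE !mulr1 mulrC.
Qed.

End Window.

Arguments zsum_chain {R a b c} c_supp {T}.
Arguments kernel_mx_distance {R a b c} c_supp {m F f}.

Lemma bracket_support {R : realType} {alpha : probability R R}
    {eta : int -> probability R R} {phi : R -> R} {m : nat} :
  scenery_width_le alpha eta m -> Rintegral alpha setT phi = 0 ->
  exists a b : int,
    (forall z, bracket eta phi z != 0 -> a <= z <= b) /\ b - a <= m%:Z.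
Proof.
move=> [a [b [_ _ eta_alpha width]]] alpha_phi0; exists a, b; split=> // z bz.
apply: eta_alpha => eta_z; move/eqP: bz; apply.
rewrite /bracket /Rintegral (eq_measure_integral alpha) ?alpha_phi0 // => A _ _.
exact: (congr1 (fun mu : set R -> \bar R => mu A) eta_z).
Qed.

Section Moments.
Context {R : realType} (q : int -> R) {eta : int -> probability R R} {phi : R -> R}.
Context {a b : int}.
Hypothesis bracket_supp : forall z, bracket eta phi z != 0 -> a <= z <= b.
Local Notation c := (bracket eta phi).

Lemma pk_total k r (t : {ffun 'I_k -> 'I_r}) :
  pk q eta phi t = total a b c (\prod_(i < k) kernel_mx a b c (Ptrans q (t i).+1)).
Proof.
rewrite /pk (zsum_chain bracket_supp (Ptrans q) (cond_moment q eta phi)) => [|z|//].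
  by rewrite big_map enumT.
by rewrite /= mulr1.
Qed.

Lemma Qk_total k m (d : {ffun 'I_k -> 'I_m.+1}) :
  Qk eta phi d = total a b c (\prod_(i < k) kernel_mx a b c (dist_kernel (d i))).
Proof.
rewrite /Qk (zsum_chain bracket_supp dist_kernel (Qsum eta phi)) => [|z|j s z].
- by rewrite big_map enumT.
- by rewrite /= mulr1.
congr (_ * zsum _); apply: funext => w; rewrite /dist_kernel.
by case: ifP; rewrite ?mul1r ?mul0r.
Qed.

End Moments.

Theorem proposition3p3 (R : realType) (q : int -> R) (hq : walk_law q)
    (m r : nat) (hM : \rank (Mmat q m r) = m.+1) (k : nat) :
  exists A : {ffun 'I_k -> 'I_m.+1} -> {ffun 'I_k -> 'I_r} -> R,
    forall (alpha : probability R R) (eta : int -> probability R R)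
           (phi : R -> R),
      scenery_width_le alpha eta m ->
      measurable_fun setT phi ->
      (exists M : R, forall x, `|phi x| <= M) ->
      Rintegral alpha setT phi = 0 ->
      forall d : {ffun 'I_k -> 'I_m.+1},
        Qk eta phi d = \sum_(t : {ffun 'I_k -> 'I_r}) A d t * pk q eta phi t.
Proof.
have /row_fullP [L LM1] : row_full (Mmat q m r) by rewrite /row_full hM.
have [_ _ _ q_sym _] := hq.
exists (fun d t => \prod_(i < k) L (d i) (t i)).
move=> alpha eta phi eta_m _ _ alpha_phi0 d.
have [a [b [supp width]]] := bracket_support eta_m alpha_phi0.
pose X (s : 'I_r) := kernel_mx a b (bracket eta phi) (Ptrans q s.+1).
pose Y (j : 'I_m.+1) := kernel_mx a b (bracket eta phi) (dist_kernel j).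
have XE s : X s = \sum_j Mmat q m r s j *: Y j.
  rewrite /X (kernel_mx_distance supp width (Ptrans_absz q_sym s.+1)).
  by apply: eq_bigr => j _; rewrite mxE.
under eq_bigr do rewrite (pk_total q supp).
rewrite (Qk_total supp) total_sum_scale -(prod_sum_scale_ffun (fun i => L (d i)) X).
congr total; apply: eq_bigr => i _.
by rewrite (left_inverse_combination LM1 X Y XE).
Qed.
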